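(* Let $\alpha:\mathbb{V}\to\mathbb{U}$ be a morphism between persistence modules of length $n$. Then for all integers $1\le a\le b\le n$, $$\sum_{b'=1}^{n}\sum_{a'=1}^{b'}\mathcal{M}^{\alpha}(a,b,a',b')\ \le\ \dim S^{\mathbb{V}}_{a,b}-\dim S^{\mathbb{V}}_{a-1,b}=\mathcal{D}^{\mathbb{V}}(a,b),$$ and for all integers $1\le a'\le b'\le n$, $$\sum_{b=1}^{n}\sum_{a=1}^{b}\mathcal{M}^{\alpha}(a,b,a',b')\ \le\ \dim S^{\mathbb{U}}_{a',b'}-\dim S^{\mathbb{U}}_{a'-1,b'}=\mathcal{D}^{\mathbb{U}}(a',b').$$
   Context: Fix a field $\mathbf F$; all vector spaces are finite-dimensional over $\mathbf F$. A persistence module $\mathbb{V}$ of length $n$ consists of vector spaces $V_1,\dots,V_n$ and linear maps $f^{\mathbb V}_i:V_i\to V_{i+1}$ ($1\le i\le n-1$). Conventions: $V_i=0$ for every integer $i\le 0$ or $i\ge n+1$, and every map $f^{\mathbb V}_i$ with domain or codomain $0$ is the zero map (in particular $f^{\mathbb V}_0:0\to V_1$ and $f^{\mathbb V}_n:V_n\to 0$). For integers $a\le b$, $f^{\mathbb V}_{a,b}=f^{\mathbb V}_{b-1}\circ\cdots\circ f^{\mathbb V}_a:V_a\to V_b$, with $f^{\mathbb V}_{a,a}=\mathrm{id}$; also $f^{\mathbb V}_b=f^{\mathbb V}_{b,b+1}$. A morphism $\alpha:\mathbb V\to\mathbb U$ of persistence modules of length $n$ is a family of linear maps $\alpha_i:V_i\to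 U_i$ with $\alpha_{i+1}\circ f^{\mathbb V}_i=f^{\mathbb U}_i\circ\alpha_i$ for all $i$ (with $\alpha_i=0$ for $i$ outside $[1,n]$). For a subspace $A\subseteq U_i$, $\alpha_i^{-1}(A)$ denotes the preimage, so $\alpha_i^{-1}(0)=\ker\alpha_i$. For integers $a,b$ define $S^{\mathbb V}_{a,b}=f^{\mathbb V}_{a,b}(V_a)\cap\ker f^{\mathbb V}_b$ if $1\le a\le b\le n$ and $S^{\mathbb V}_{a,b}=0$ otherwise, and $\mathcal D^{\mathbb V}(a,b)=\dim S^{\mathbb V}_{a,b}-\dim S^{\mathbb V}_{a-1,b}$ (the multiplicity of the interval $[a,b]$ in the barcode of $\mathbb V$). For a morphism $\alpha:\mathbb V\to\mathbb U$ define, for integers $a,b,a',b'$, $$\mathcal X^{\alpha}(a,b,a',b')=\dim\big[S^{\mathbb V}_{a,b}\cap f^{\mathbb V}_{b',b}\big(\alpha_{b'}^{-1}(S^{\mathbb U}_{a',b'})\big)\big]-\dim\big[S^{\mathbb V}_{a,b}\cap f^{\mathbb V}_{b',b}\big(\ker\alpha_{b'}\big)\big]$$ if $b'\le b\le n$, and $\mathcal X^{\alpha}(a,b,a',b')=0$ otherwise. Define $$\mathcal M^{\alpha}(a,b,a',b')=\mathcal X^{\alpha}(a,b,a',b')-\mathcal X^{\alpha}(a-1,b,a',b')-\mathcal X^{\alpha}(a,b,a'-1,b')+\mathcal X^{\alpha}(a-1,b,a'-1,b').$$ *)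

(* Persistence modules modelled inside an ambient
   finite-dimensional vector space W (a vectType over the field F):
   V_i is a subspace of W and f_i a linear map on W restricted to V_i. *)
From HB Require Import structures.
From mathcomp Require Import all_boot all_order all_algebra.
Set Implicit Arguments. Unset Strict Implicit. Unset Printing Implicit Defensive.
Import Order.TTheory GRing.Theory Num.Theory.
Local Open Scope ring_scope.

Record pmod (F : fieldType) (W : vectType F) (n : nat) := PMod {
  pspace : nat -> {vspace W};
  pmap : nat -> 'End(W);
  pspace_out : forall i, (i == 0)%N || (n < i)%N -> pspace i = 0%VS;
  pmap_in : forall i, (pmap i @: pspace i <= pspace i.+1)%VS
}.

Section Defs.
Variables (F : fieldType) (n : nat).

Fixpoint fcomp (W : vectType F) (V : pmod W n) (a k : nat) : 'End(W) :=
  match k with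
  | 0 => \1%VF
  | k'.+1 => (pmap V (a + k') \o fcomp V a k')%VF
  end.

Definition fab (W : vectType F) (V : pmod W n) (a b : nat) : 'End(W) :=
  fcomp V a (b - a).

Definition kerf (W : vectType F) (V : pmod W n) (b : nat) : {vspace W} :=
  (pspace V b :&: lker (pmap V b))%VS.

Definition Ssp (W : vectType F) (V : pmod W n) (a b : nat) : {vspace W} :=
  if [&& (1 <= a)%N, (a <= b)%N & (b <= n)%N]
  then ((fab V a b @: pspace V a) :&: kerf V b)%VS
  else 0%VS.

Definition Dbar (W : vectType F) (V : pmod W n) (a b : nat) : int :=
  (\dim (Ssp V a b))%:Z - (\dim (Ssp V a.-1 b))%:Z.

Definition is_pmorph (W W' : vectType F) (V : pmod W n) (U : pmod W' n)
    (al : nat -> 'Hom(W, W')) : Prop :=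
  (forall i, (al i @: pspace V i <= pspace U i)%VS) /\
  (forall i v, v \in pspace V i ->
     al i.+1 (pmap V i v) = pmap U i (al i v)).

Definition preim (W W' : vectType F) (V : pmod W n)
    (al : nat -> 'Hom(W, W')) (i : nat) (A : {vspace W'}) : {vspace W} :=
  (pspace V i :&: (al i @^-1: A))%VS.

Definition Xal (W W' : vectType F) (V : pmod W n) (U : pmod W' n)
    (al : nat -> 'Hom(W, W')) (a b a' b' : nat) : int :=
  if (b' <= b)%N && (b <= n)%N then
    (\dim (Ssp V a b :&: (fab V b' b @: preim V al b' (Ssp U a' b'))))%:Z
    - (\dim (Ssp V a b :&: (fab V b' b @: preim V al b' 0%VS)))%:Z
  else 0.

Definition Mal (W W' : vectType F) (V : pmod W n) (U : pmod W' n)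
    (al : nat -> 'Hom(W, W')) (a b a' b' : nat) : int :=
  Xal V U al a b a' b' - Xal V U al a.-1 b a' b'
  - Xal V U al a b a'.-1 b' + Xal V U al a.-1 b a'.-1 b'.

End Defs.

From Pilot Require Import Defs.
From HB Require Import structures.
From mathcomp Require Import all_boot all_order all_algebra.
From mathcomp Require Import zify lra.
Set Implicit Arguments. Unset Strict Implicit. Unset Printing Implicit Defensive.
Import Order.TTheory GRing.Theory Num.Theory.
Local Open Scope ring_scope.

(* Both inequalities come from two dimension counts of linear algebra.
   For subspaces A' <= A, the relative dimension
     reldim A A' C = dim (A :&: C) - dim (A' :&: C)
   is monotone in C (a consequence of the modular law), and it is at most
   dim A - dim A' (take C = fullv).  Preimages and kernels of composites are
   counted with the rank-nullity theorem.
   Summing M^alpha over one pair of indices telescopes, so each double sum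
   reduces to a single sum of differences of X^alpha.
   - For a fixed source interval [a, b] this single sum is a sum of relative
     dimensions of A = S^V_{a,b}, A' = S^V_{a-1,b}: over m = 1..b it adds
     reldim A A' P_m - reldim A A' K_m, where P_m = f_{m,b}(alpha_m^-1 S^U_{m,m})
     and K_m = f_{m,b}(alpha_m^-1 0).  Since alpha is a morphism,
     P_m <= K_{m+1}, so the sum is at most reldim A A' P_b <= reldim A A' fullv.
   - For a fixed target interval [a', b'] the summands are the increments of
     m |-> reldim E E' (ker f_{b',m}) with E = alpha_{b'}^-1(S^U_{a',b'}) and
     E' = alpha_{b'}^-1(S^U_{a'-1,b'}), so the sum telescopes and is bounded by
     dim E - dim E' <= dim S^U_{a',b'} - dim S^U_{a'-1,b'}. *)

Section LinearAlgebra.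
Variable K : fieldType.

(* The modular law in dimension form: C |-> dim (A :&: C) - dim (A' :&: C)
   is monotone when A' <= A. *)
Lemma dimv_cap_modular (W : vectType K) (A A' C D : {vspace W}) :
  (A' <= A)%VS -> (C <= D)%VS ->
  (\dim (A :&: C) + \dim (A' :&: D) <= \dim (A :&: D) + \dim (A' :&: C))%N.
Proof.
move=> sA sC.
have sum_sub : (\dim ((A :&: C) + (A' :&: D)) <= \dim (A :&: D))%N.
  by apply: dimvS; rewrite subv_add !capvS.
have cap_sub : (\dim ((A :&: C) :&: (A' :&: D)) <= \dim (A' :&: C))%N.
  apply: dimvS; rewrite subv_cap.
  rewrite (subv_trans (capvSr _ _) (capvSl _ _)).
  by rewrite (subv_trans (capvSl _ _) (capvSr _ _)).
have := dimv_sum_cap (A :&: C) (A' :&: D); lia.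
Qed.

Definition reldim (W : vectType K) (A A' C : {vspace W}) : int :=
  (\dim (A :&: C))%:Z - (\dim (A' :&: C))%:Z.

Lemma reldim_mono (W : vectType K) (A A' C D : {vspace W}) :
  (A' <= A)%VS -> (C <= D)%VS -> reldim A A' C <= reldim A A' D.
Proof. by move=> sA sC; have := dimv_cap_modular sA sC; rewrite /reldim; lia. Qed.

Lemma reldim_ge0 (W : vectType K) (A A' C : {vspace W}) :
  (A' <= A)%VS -> 0 <= reldim A A' C.
Proof.
move=> sA; have := reldim_mono sA (sub0v C).
by rewrite /reldim !capv0 dimv0 subrr.
Qed.

Lemma reldimT (W : vectType K) (A A' : {vspace W}) :
  reldim A A' fullv = (\dim A)%:Z - (\dim A')%:Z.
Proof. by rewrite /reldim !capvf. Qed.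

Lemma limg_cap_preim (W W' : vectType K) (f : 'Hom(W, W'))
    (U : {vspace W}) (X : {vspace W'}) :
  (f @: (U :&: f @^-1: X) = (f @: U) :&: X)%VS.
Proof.
apply/eqP; rewrite eqEsubv; apply/andP; split.
  apply/subvP=> w /memv_imgP [u /memv_capP [uU uX] ->].
  by rewrite memv_cap memv_img //= memv_preim.
apply/subvP=> w /memv_capP [/memv_imgP [u uU ->] fuX].
by apply: memv_img; rewrite memv_cap uU -memv_preim.
Qed.

Lemma dimv_cap_preim (W W' : vectType K) (f : 'Hom(W, W'))
    (U : {vspace W}) (X : {vspace W'}) :
  \dim (U :&: f @^-1: X) = (\dim (U :&: lker f) + \dim (f @: U :&: X))%N.
Proof.
rewrite -limg_cap_preim -(limg_ker_dim f (U :&: f @^-1: X)) -capvA.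
suff -> : (f @^-1: X :&: lker f = lker f)%VS by [].
by apply/capv_idPr; rewrite -lpreim0 lpreimS ?sub0v.
Qed.

Lemma dimv_preim_diff (W W' : vectType K) (f : 'Hom(W, W'))
    (U : {vspace W}) (S S' : {vspace W'}) :
  (S' <= S)%VS ->
  (\dim (U :&: f @^-1: S))%:Z - (\dim (U :&: f @^-1: S'))%:Z
    <= (\dim S)%:Z - (\dim S')%:Z.
Proof.
move=> sS; rewrite !dimv_cap_preim -reldimT.
have := reldim_mono sS (subvf (f @: U)).
by rewrite /reldim ![(_ :&: (f @: U))%VS]capvC; lia.
Qed.

Lemma lker_comp (W W' W'' : vectType K) (f : 'Hom(W, W')) (g : 'Hom(W', W'')) :
  lker (g \o f)%VF = (f @^-1: lker g)%VS.
Proof. by apply/vspaceP=> v; rewrite -memv_preim !memv_ker comp_lfunE. Qed.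

Lemma dimv_cap_lker_comp (W W' W'' : vectType K) (f : 'Hom(W, W'))
    (g : 'Hom(W', W'')) (E : {vspace W}) :
  \dim (E :&: lker (g \o f)%VF)
  = (\dim (E :&: lker f) + \dim (f @: E :&: lker g))%N.
Proof. by rewrite lker_comp dimv_cap_preim. Qed.

End LinearAlgebra.

Lemma sum_interleaved_le (p k : nat -> int) N : (0 < N)%N ->
  (forall m, (1 <= m < N)%N -> p m <= k m.+1) ->
  \sum_(1 <= m < N.+1) (p m - k m) <= p N - k 1%N.
Proof.
elim: N => [//|[|N] IH] _ pk; first by rewrite big_nat1.
rewrite big_nat_recr //=.
have le_prefix : \sum_(1 <= m < N.+2) (p m - k m) <= p N.+1 - k 1%N.
  by apply: IH => // m hm; apply: pk; lia.
by have := pk N.+1 (ltnSn _); lra.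
Qed.

Section PersistenceModule.
Variables (K : fieldType) (n : nat) (W : vectType K) (V : pmod W n).

Lemma fcompSl a k : fcomp V a k.+1 = (fcomp V a.+1 k \o Defs.pmap V a)%VF.
Proof.
elim: k => [|k IH]; first by rewrite /= addn0 comp_lfun1r comp_lfun1l.
have fcompS b m : fcomp V b m.+1 = (Defs.pmap V (b + m) \o fcomp V b m)%VF by [].
by rewrite fcompS IH comp_lfunA fcompS addSnnS.
Qed.

Lemma fab_id b : fab V b b = \1%VF.
Proof. by rewrite /fab subnn. Qed.

Lemma fab_step b' b : (b' < b)%N ->
  fab V b' b = (fab V b'.+1 b \o Defs.pmap V b')%VF.
Proof. by move=> lt_b'b; rewrite /fab -(subnSK lt_b'b) fcompSl. Qed.

Lemma fab_next b' b : (b' <= b)%N ->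
  fab V b' b.+1 = (Defs.pmap V b \o fab V b' b)%VF.
Proof. by move=> le_b'b; rewrite /fab (subSn le_b'b) /= subnKC. Qed.

Lemma fab_pres b' b : (b' <= b)%N -> (fab V b' b @: pspace V b' <= pspace V b)%VS.
Proof.
move=> /subnKC {2}<-; rewrite /fab; elim: (b - b')%N => [|k IH] /=.
  by rewrite addn0 lim1g.
by rewrite limg_comp addnS (subv_trans (limgS _ IH) (Defs.pmap_in _ _)).
Qed.

Lemma Ssp_diag b : (1 <= b)%N -> (b <= n)%N ->
  Ssp V b b = (pspace V b :&: lker (Defs.pmap V b))%VS.
Proof.
by move=> b_gt0 le_bn; rewrite /Ssp b_gt0 leqnn le_bn fab_id lim1g capvA capvv.
Qed.

Lemma Ssp_diag_ker m : (Ssp V m m <= lker (Defs.pmap V m))%VS.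
Proof.
rewrite /Ssp; case: ifP => _; last exact: sub0v.
by rewrite (subv_trans (capvSr _ _) (capvSr _ _)).
Qed.

(* S_{a-1,b} <= S_{a,b}: an element of the image of V_{a-1} is in that of V_a. *)
Lemma Ssp_pred_sub a b : (1 <= a)%N -> (a <= b)%N ->
  (Ssp V a.-1 b <= Ssp V a b)%VS.
Proof.
case: a => [//|[|a]] _ le_ab; first exact: sub0v.
rewrite /Ssp /=; case: (b <= n)%N; rewrite ?andbT ?andbF ?sub0v //.
rewrite le_ab (ltnW le_ab).
rewrite (fab_step le_ab) limg_comp capvS ?limgS //; exact: Defs.pmap_in.
Qed.

(* For E <= V_{b'}, the part of f_{b',b}(E) killed by f_b counts the new
   kernel of f_{b',b+1} on E. *)
Lemma dimv_Ssp_diag_cap_img (E : {vspace W}) b' b :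
  (E <= pspace V b')%VS -> (b' <= b)%N -> (1 <= b)%N -> (b <= n)%N ->
  (\dim (Ssp V b b :&: (fab V b' b @: E)) + \dim (E :&: lker (fab V b' b))
   = \dim (E :&: lker (fab V b' b.+1)))%N.
Proof.
move=> sE le_b'b b_gt0 le_bn.
have sfE : (fab V b' b @: E <= pspace V b)%VS.
  exact: subv_trans (limgS _ sE) (fab_pres le_b'b).
rewrite (fab_next le_b'b) dimv_cap_lker_comp (Ssp_diag b_gt0 le_bn).
by rewrite capvC capvA (capv_idPl sfE) addnC.
Qed.

End PersistenceModule.

Section Morphism.
Variables (K : fieldType) (n : nat) (W W' : vectType K).
Variables (V : pmod W n) (U : pmod W' n) (al : nat -> 'Hom(W, W')).

Lemma Xal_src0 b a' b' : Xal V U al 0 b a' b' = 0.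
Proof. by rewrite /Xal; case: ifP => // _; rewrite /Ssp /= !cap0v subrr. Qed.

Lemma Xal_tgt0 a b b' : Xal V U al a b 0 b' = 0.
Proof. by rewrite /Xal; case: ifP => // _; rewrite /Ssp /= subrr. Qed.

Lemma Xal_lt a b a' b' : (b < b')%N -> Xal V U al a b a' b' = 0.
Proof. by move=> lt_bb'; rewrite /Xal leqNgt lt_bb'. Qed.

Lemma sum_Mal_tgt a b b' : \sum_(1 <= a' < b'.+1) Mal V U al a b a' b' =
  Xal V U al a b b' b' - Xal V U al a.-1 b b' b'.
Proof.
pose X k := Xal V U al a b k.-1 b' - Xal V U al a.-1 b k.-1 b'.
rewrite (telescope_sumr_eq X) /X //=.
  by rewrite !Xal_tgt0 subr0.
by move=> k _; rewrite /Mal /X /=; lia.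
Qed.

Lemma sum_Mal_src a' b' b : \sum_(1 <= a < b.+1) Mal V U al a b a' b' =
  Xal V U al b b a' b' - Xal V U al b b a'.-1 b'.
Proof.
pose X k := Xal V U al k.-1 b a' b' - Xal V U al k.-1 b a'.-1 b'.
rewrite (telescope_sumr_eq X) /X //=.
  by rewrite !Xal_src0 subr0.
by move=> k _; rewrite /Mal /X /=; lia.
Qed.

Definition img_preim (m b : nat) (A : {vspace W'}) : {vspace W} :=
  (fab V m b @: Defs.preim V al m A)%VS.

Lemma preim_mono i (A B : {vspace W'}) :
  (A <= B)%VS -> (Defs.preim V al i A <= Defs.preim V al i B)%VS.
Proof. by move=> sAB; apply: capvS (subvv _) (lpreimS _ sAB). Qed.

Lemma Xal_src_diff a b a' b' : (b' <= b)%N -> (b <= n)%N ->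
  Xal V U al a b a' b' - Xal V U al a.-1 b a' b' =
  reldim (Ssp V a b) (Ssp V a.-1 b) (img_preim b' b (Ssp U a' b'))
  - reldim (Ssp V a b) (Ssp V a.-1 b) (img_preim b' b 0%VS).
Proof.
by move=> le_b'b le_bn; rewrite /Xal le_b'b le_bn /reldim /img_preim /=; lra.
Qed.

Lemma Xal_tgt_diff a' b' b : (b' <= b)%N -> (1 <= b)%N -> (b <= n)%N ->
  Xal V U al b b a' b' - Xal V U al b b a'.-1 b' =
  reldim (Defs.preim V al b' (Ssp U a' b')) (Defs.preim V al b' (Ssp U a'.-1 b'))
    (lker (fab V b' b.+1))
  - reldim (Defs.preim V al b' (Ssp U a' b')) (Defs.preim V al b' (Ssp U a'.-1 b'))
    (lker (fab V b' b)).
Proof.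
move=> le_b'b b_gt0 le_bn.
have count A := dimv_Ssp_diag_cap_img (V := V) (capvSl _ (al b' @^-1: A))
  le_b'b b_gt0 le_bn.
have := count (Ssp U a' b'); have := count (Ssp U a'.-1 b'); have := count 0%VS.
rewrite /Xal le_b'b le_bn /reldim /Defs.preim /=.
(* Abstracting S^U_{a'-1,b'} keeps lia from rewriting the predecessor in it. *)
by move: (Ssp U a'.-1 b') => S'; lia.
Qed.

Hypothesis mor : is_pmorph V U al.

(* A vector of V_m sent by alpha_m into S^U_{m,m} is killed by alpha_{m+1} o f_m,
   so its image under f_m already lies in alpha_{m+1}^-1 0: P_m <= K_{m+1}. *)
Lemma img_preim_Ssp_sub m b : (m < b)%N ->
  (img_preim m b (Ssp U m m) <= img_preim m.+1 b 0%VS)%VS.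
Proof.
move=> lt_mb; rewrite /img_preim (fab_step V lt_mb) limg_comp; apply: limgS.
apply/subvP=> w /memv_imgP [v /memv_capP [vV]]; rewrite -memv_preim => aS ->.
rewrite memv_cap -memv_preim memv0 (subvP (Defs.pmap_in V m)) ?memv_img //=.
by case: mor => _ ->; rewrite // -memv_ker (subvP (Ssp_diag_ker U m)).
Qed.

End Morphism.

Section SumBounds.
Variables (K : fieldType) (n : nat) (W W' : vectType K).
Variables (V : pmod W n) (U : pmod W' n) (al : nat -> 'Hom(W, W')).
Hypothesis mor : is_pmorph V U al.

(* First inequality: the row of M at the source interval [a, b].  Terms with
   b' > b vanish; the others are bounded along the chain K_1, P_1 <= K_2, ..., P_b. *)
Lemma row_sum_Mal_le a b : (1 <= a)%N -> (a <= b)%N -> (b <= n)%N ->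
  \sum_(1 <= b' < n.+1) \sum_(1 <= a' < b'.+1) Mal V U al a b a' b'
    <= Dbar V a b.
Proof.
move=> a_gt0 le_ab le_bn.
have sS := Ssp_pred_sub V a_gt0 le_ab.
have b_gt0 : (0 < b)%N := leq_trans a_gt0 le_ab.
pose g C := reldim (Ssp V a b) (Ssp V a.-1 b) C.
pose p m := g (img_preim V al m b (Ssp U m m)).
pose k m := g (img_preim V al m b 0%VS).
under eq_bigr => b' _ do rewrite sum_Mal_tgt.
rewrite (big_cat_nat (n := b.+1)) //= [X in _ + X]big_nat_cond.
rewrite [X in _ + X]big1 ?addr0; last first.
  by move=> m /andP[/andP[lt_bm _] _]; rewrite !Xal_lt ?subrr.
rewrite (eq_big_nat _ _ (F2 := fun m => p m - k m)); last first.
  by move=> m /andP[_ le_mb]; rewrite Xal_src_diff.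
apply: le_trans (sum_interleaved_le b_gt0 _) _.
  by move=> m /andP[_ lt_mb]; apply/reldim_mono/img_preim_Ssp_sub.
rewrite /Dbar -reldimT -[X in _ <= X]subr0.
by apply: lerB; [exact: reldim_mono sS (subvf _) | exact: reldim_ge0].
Qed.

(* Second inequality: the column of M at the target interval [a', b'].  The
   sum telescopes to h (n+1) - h b' with h m = reldim E E' (ker f_{b',m}). *)
Lemma col_sum_Mal_le a' b' : (1 <= a')%N -> (a' <= b')%N -> (b' <= n)%N ->
  \sum_(1 <= b < n.+1) \sum_(1 <= a < b.+1) Mal V U al a b a' b'
    <= Dbar U a' b'.
Proof.
move=> a'_gt0 le_a'b' le_b'n.
have sS := Ssp_pred_sub U a'_gt0 le_a'b'.
have b'_gt0 : (0 < b')%N := leq_trans a'_gt0 le_a'b'.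
pose E := Defs.preim V al b' (Ssp U a' b').
pose E' := Defs.preim V al b' (Ssp U a'.-1 b').
have sE : (E' <= E)%VS := preim_mono V al b' sS.
pose h m := reldim E E' (lker (fab V b' (maxn m b'))).
under eq_bigr => b _ do rewrite sum_Mal_src.
rewrite (telescope_sumr_eq h) //; last first.
  move=> b /andP[b_gt0 lt_bn]; rewrite /h; case: (leqP b' b) => [le_b'b | lt_bb'].
    by rewrite (maxn_idPl (leqW le_b'b)) Xal_tgt_diff.
  by rewrite (maxn_idPr lt_bb') !Xal_lt ?subrr.
rewrite /h (maxn_idPl (leqW le_b'n)) (maxn_idPr b'_gt0).
apply: le_trans (dimv_preim_diff (al b') (pspace V b') sS).
rewrite -reldimT -[X in _ <= X]subr0.
by apply: lerB; [exact: reldim_mono sE (subvf _) | exact: reldim_ge0].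
Qed.

End SumBounds.

Theorem mainTheorem1 (F : fieldType) (n : nat) (W W' : vectType F)
    (V : pmod W n) (U : pmod W' n) (al : nat -> 'Hom(W, W')) :
  is_pmorph V U al ->
  (forall a b : nat, (1 <= a)%N -> (a <= b)%N -> (b <= n)%N ->
     \sum_(1 <= b' < n.+1) \sum_(1 <= a' < b'.+1) Mal V U al a b a' b'
       <= Dbar V a b) /\
  (forall a' b' : nat, (1 <= a')%N -> (a' <= b')%N -> (b' <= n)%N ->
     \sum_(1 <= b < n.+1) \sum_(1 <= a < b.+1) Mal V U al a b a' b'
       <= Dbar U a' b').
Proof.
move=> mor; split.
- by move=> a b; apply: row_sum_Mal_le.
- by move=> a' b'; apply: col_sum_Mal_le.
Qed.
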